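(* Let $n,k$ be positive integers with $n\ge k$. Then $\mathrm{JS}_n^k(-1)$ is equal to the number of signed $k$-partitions of $[\pm n]_0$ whose zero-block is $\{0\}$.
   Context: $\mathrm{JS}_n^k(z)$ is defined by $\mathrm{JS}_0^0(z)=1$, $\mathrm{JS}_n^k(z)=0$ if $k\notin\{1,\dots,n\}$ (for $(n,k)\neq(0,0)$), and $\mathrm{JS}_n^k(z)=\mathrm{JS}_{n-1}^{k-1}(z)+k(k+z)\mathrm{JS}_{n-1}^k(z)$ for $n,k\ge1$. Let $[\pm n]_0=\{0,1,-1,\dots,n,-n\}$ and $[n]=\{1,\dots,n\}$. A signed $k$-partition of $[\pm n]_0$ is a set partition of $[\pm n]_0$ into $k+1$ nonempty blocks $B_0,B_1,\dots,B_k$ such that (1) $0\in B_0$ and for every $i\in[n]$, $\{i,-i\}\not\subset B_0$; (2) for every $j\in[k]$ and $i\in[n]$, $\{i,-i\}\subset B_j$ iff $i=\min(B_j\cap[n])$. $B_0$ is the zero-block. *)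

From mathcomp Require Import all_boot all_order all_algebra.
Set Implicit Arguments. Unset Strict Implicit. Unset Printing Implicit Defensive.
Import GRing.Theory Num.Theory.

Fixpoint JS (z : int) (n k : nat) : int :=
  match n with
  | 0 => if k == 0 then 1%R else 0%R
  | n'.+1 =>
      match k with
      | 0 => 0%R
      | k'.+1 => if n'.+1 < k then 0%R
                 else (JS z n' k' + (k%:Z * (k%:Z + z)) * JS z n' k)%R
      end
  end.

(* The set [+-n]_0 = {0, 1, -1, ..., n, -n}, encoded as a finite type:      *)
(*   None          <-> 0                                                     *)
(*   Some (i,true) <-> i+1      Some (i,false) <-> -(i+1)    (i : 'I_n)      *)
Definition pmset (n : nat) : finType := option ('I_n * bool).

Definition to_int n (x : pmset n) : int :=
  match x with
  | None => 0
  | Some (i, true) => (i.+1)%:Z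
  | Some (i, false) => (- (i.+1)%:Z)%R
  end.

Definition zero_el n : pmset n := None.
Definition pos_el n (j : 'I_n) : pmset n := Some (j, true).
Definition neg_el n (j : 'I_n) : pmset n := Some (j, false).

Definition minabs n (B : {set pmset n}) : nat :=
  \big[minn/n.+1]_(x in B) `|to_int x|%N.

Definition signed_kpart n k (P : {set {set pmset n}}) : bool :=
  let B0 := pblock P (zero_el n) in
  [&& partition P [set: pmset n],
      #|P| == k.+1,
      [forall j : 'I_n, ~~ ((pos_el j \in B0) && (neg_el j \in B0))] &
      [forall B in P, (B != B0) ==>
         [forall j : 'I_n,
            ((pos_el j \in B) && (neg_el j \in B)) == (j.+1 == minabs B)]]].

From mathcomp Require Import all_boot all_order all_algebra.
Import Order.TTheory GRing.Theory Num.Theory.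
Set Implicit Arguments. Unset Strict Implicit. Unset Printing Implicit Defensive.

(* A signed partition of [+-n]_0 with zero-block {0} is determined by the map sending
   each nonzero x to the least absolute value in its block; the blocks other than {0}
   are indexed by their "leaders", the j with {j, -j} inside one block, which are
   exactly these minima.  Such maps are characterised by local conditions
   (valid_minmap).  Restricting a map on [+-(n+1)]_0 to [+-n]_0 forgets where n+1 and
   -(n+1) went: either together into a new block, or into two distinct old blocks.
   With k old blocks this gives 1 + k(k-1) choices, so the number c(n,k) of such
   partitions satisfies c(n+1,k+1) = c(n,k) + (k+1)k c(n,k+1), the recursion of
   JS_n^k(-1). *)

Lemma card_set_sum_nat (T : finType) (p : pred T) : #|[set x | p x]| = \sum_x p x.
Proof. by rewrite -sum1dep_card big_mkcond /=; apply: eq_bigr => x _; case: (p x). Qed.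

Lemma card_distinct_pairs (T : finType) (p : pred T) :
  #|[set q : T * T | [&& p q.1, p q.2 & q.1 != q.2]]|
  = #|[set x | p x]| * #|[set x | p x]|.-1.
Proof.
rewrite -[LHS]sum1dep_card -(pair_big_dep p (fun a b => p b && (a != b)) (fun _ _ => 1)) /=.
rewrite -sum_nat_const; apply: eq_big => [a | a pa]; first by rewrite inE.
rewrite sum1dep_card [in RHS](cardsD1 a) inE pa add1n /=.
by apply: eq_card => b; rewrite !inE eq_sym andbC.
Qed.

Lemma forall_bool (p : pred bool) : [forall c, p c] = p true && p false.
Proof. by apply/forallP/andP => [pc | [pt pf] []]. Qed.

Lemma forall_ord_recr n (p : pred 'I_n.+1) :
  [forall i, p i] = [forall j : 'I_n, p (lift ord_max j)] && p ord_max.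
Proof.
apply/forallP/andP => [pi | [/forallP pj pmax] i]; first by split; [apply/forallP|].
by case: (unliftP ord_max i) => [j ->|->].
Qed.

Section PreimPartition.
Variables (T rT : finType) (f : T -> rT).

Lemma pblock_preim_partition x :
  pblock (preim_partition f [set: T]) x = [set y | f x == f y].
Proof.
apply/setP=> y; rewrite inE (pblock_equivalence_partition _ (in_setT x) (in_setT y)) //.
by move=> ? ? ? _ _ _; split=> // /eqP->.
Qed.

Lemma card_preim_partition D : #|preim_partition f D| = #|f @: D|.
Proof.
have -> : preim_partition f D = (fun v => [set y in D | v == f y]) @: (f @: D).
  by rewrite -imset_comp.
apply: card_in_imset => _ _ /imsetP[x Dx ->] /imsetP[x' Dx' ->] /setP/(_ x).
by rewrite !inE Dx eqxx => /esym/eqP.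
Qed.

End PreimPartition.

Lemma abs_to_int_Some n (y : 'I_n * bool) : `|to_int (Some y : pmset n)|%N = y.1.+1.
Proof. by case: y => j []. Qed.

Lemma abs_to_int_le n (x : pmset n) : `|to_int x|%N <= n.
Proof. by case: x => [[j []]|] //=; rewrite ?abszN /= ltn_ord. Qed.

Section MinAbs.
Variables (n : nat) (B : {set pmset n}).

Lemma minabsE : minabs B = \big[Order.min/n.+1]_(x in B) `|to_int x|%N.
Proof. by []. Qed.

Lemma minabs_le x : x \in B -> minabs B <= `|to_int x|%N.
Proof. by move=> Bx; rewrite minabsE -leEnat; apply: bigmin_le_cond. Qed.

Lemma minabs_attained x0 : x0 \in B -> exists2 x, x \in B & minabs B = `|to_int x|%N.
Proof.
move=> Bx0; rewrite minabsE.
have [x Bx ->] := @eq_bigmin _ _ _ n.+1 x0 (mem B) (fun x => `|to_int x|%N) Bx0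
  (fun x _ => leqW (abs_to_int_le x)).
by exists x.
Qed.

Lemma minabs_eq x : x \in B -> (forall y, y \in B -> `|to_int x|%N <= `|to_int y|%N) ->
  minabs B = `|to_int x|%N.
Proof.
move=> Bx minx; apply/eqP; rewrite eqn_leq minabs_le // minabsE -leEnat.
by apply/bigmin_geP; split; [exact: leqW (abs_to_int_le x) | exact: minx].
Qed.

End MinAbs.

(* [f (j, c) = i] says that the block of +(j+1) (c = true) or -(j+1) (c = false)
   has least absolute value i+1. *)
Definition minmap n := {ffun 'I_n * bool -> 'I_n}.

Definition leader n (f : minmap n) (j : 'I_n) : bool := f (j, true) == j.

Definition valid_at n (f : minmap n) (j : 'I_n) : bool :=
  [&& leader f j == (f (j, false) == j),
      [forall c, f (f (j, c), true) == f (j, c)],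
      [forall c, f (j, c) <= j] &
      (f (j, true) == f (j, false)) ==> leader f j].

Definition valid_minmap n (f : minmap n) : bool := [forall j, valid_at f j].

Definition nleaders n (f : minmap n) : nat := \sum_(j < n) leader f j.

Definition partition_of n (f : minmap n) : {set {set pmset n}} :=
  preim_partition (omap f) [set: pmset n].

Definition minmap_of n (P : {set {set pmset n}}) : minmap n :=
  [ffun y => insubd y.1 (minabs (pblock P (Some y))).-1].

Lemma card_leaders n (f : minmap n) : #|[set j | leader f j]| = nleaders f.
Proof. exact: card_set_sum_nat. Qed.

Lemma nleaders_le n (f : minmap n) : nleaders f <= n.
Proof. by rewrite -card_leaders -[n in _ <= n]card_ord max_card. Qed.

Section ValidMinmap.
Variables (n : nat) (f : minmap n).
Hypothesis fP : valid_minmap f.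

Let fPj j : valid_at f j. Proof. exact: forallP fP j. Qed.

Lemma leaderE j : leader f j = (f (j, false) == j).
Proof. by case/and4P: (fPj j) => /eqP. Qed.

Lemma minmap_idem x : f (f x, true) = f x.
Proof. by case: x => j c; case/and4P: (fPj j) => _ /forallP/(_ c)/eqP. Qed.

Lemma minmap_le x : f x <= x.1.
Proof. by case: x => j c; case/and4P: (fPj j) => _ _ /forallP/(_ c). Qed.

Lemma leader_of_eq j : f (j, true) = f (j, false) -> leader f j.
Proof. by case/and4P: (fPj j) => _ _ _ /implyP fj /eqP/fj. Qed.

Lemma minabs_partition_of y : minabs (pblock (partition_of f) (Some y)) = (f y).+1.
Proof.
rewrite pblock_preim_partition (@minabs_eq _ _ (pos_el (f y))) ?abs_to_int_Some //.
  by rewrite inE /= minmap_idem.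
by move=> [w|]; rewrite inE //= => /eqP [->]; rewrite abs_to_int_Some; exact: minmap_le.
Qed.

Lemma zero_block_partition_of : pblock (partition_of f) (zero_el n) = [set zero_el n].
Proof. by apply/setP=> y; rewrite pblock_preim_partition !inE; case: y. Qed.

Lemma card_partition_of : #|partition_of f| = (nleaders f).+1.
Proof.
rewrite card_preim_partition.
have -> : omap f @: [set: pmset n] = None |: (Some @: [set j | leader f j]).
  apply/setP=> v; apply/imsetP/setU1P => [[[y|] _ ->]|]; [right|by left|].
    by apply: imset_f; rewrite inE /leader minmap_idem.
  case=> [->|/imsetP[j]]; first by exists None.
  by rewrite inE => /eqP fj ->; exists (pos_el j); rewrite ?inE //= fj.
rewrite cardsU1 card_imset; last exact: Some_inj.
by rewrite card_leaders; case: imsetP => // -[].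
Qed.

Lemma pair_in_block_partition_of y j :
  (Some (f y) == Some (f (j, true))) && (Some (f y) == Some (f (j, false))) = (j == f y).
Proof.
rewrite !(inj_eq Some_inj); apply/andP/eqP => [[/eqP fyj /eqP fyj']|->].
  by rewrite fyj -[j in LHS](eqP (leader_of_eq (etrans (esym fyj) fyj'))).
have := leaderE (f y); rewrite /leader minmap_idem eqxx => /esym/eqP ->.
by split.
Qed.

Lemma signed_kpart_partition_of : signed_kpart (nleaders f) (partition_of f).
Proof.
rewrite /signed_kpart zero_block_partition_of card_partition_of eqxx preim_partitionP /=.
apply/andP; split; first by apply/forallP=> j; rewrite !inE.
apply/forall_inP=> _ /imsetP[x _ ->].
have -> : [set y in [set: pmset n] | omap f x == omap f y] = pblock (partition_of f) x.
  by rewrite pblock_preim_partition; apply/setP=> y; rewrite !inE.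
case: x => [y|]; last by rewrite zero_block_partition_of eqxx.
rewrite minabs_partition_of; apply/implyP=> _; apply/forallP=> j.
by rewrite pblock_preim_partition !inE eqSS val_eqE pair_in_block_partition_of.
Qed.

Lemma partition_ofK : minmap_of (partition_of f) = f.
Proof.
apply/ffunP=> y; apply: val_inj.
by rewrite ffunE minabs_partition_of /= val_insubd ltn_ord.
Qed.

End ValidMinmap.

Section MinmapOf.
Variables (n k : nat) (P : {set {set pmset n}}).
Hypotheses (Pk : signed_kpart k P) (P0 : pblock P (zero_el n) = [set zero_el n]).

Let partP : partition P [set: pmset n]. Proof. by case/and4P: Pk. Qed.
Let trivP : trivIset P. Proof. by case/and3P: partP. Qed.
Let blockP x : pblock P x \in P.
Proof. by apply: pblock_mem; rewrite (cover_partition partP). Qed.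
Let in_blockP x : x \in pblock P x.
Proof. by rewrite mem_pblock (cover_partition partP). Qed.

Let nonzero_block y : pblock P (Some y) != pblock P (zero_el n).
Proof. by rewrite P0; apply: contraTneq (in_blockP (Some y)) => ->; rewrite inE. Qed.

Let pair_in_block y j :
  (pos_el j \in pblock P (Some y)) && (neg_el j \in pblock P (Some y))
  = (j.+1 == minabs (pblock P (Some y))).
Proof.
case/and4P: Pk => _ _ _ /forall_inP/(_ _ (blockP (Some y))).
by rewrite (negbTE (nonzero_block y)) /= => /forallP/(_ j)/eqP.
Qed.

Lemma minmap_of_spec y :
  [/\ pos_el (minmap_of P y) \in pblock P (Some y),
      neg_el (minmap_of P y) \in pblock P (Some y) &
      minabs (pblock P (Some y)) = (minmap_of P y).+1].
Proof.
have [[[j c]|] jB mj] := minabs_attained (in_blockP (Some y)); last first.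
  by have := nonzero_block y; rewrite (def_pblock trivP (blockP _) jB) eqxx.
rewrite abs_to_int_Some /= in mj.
have -> : minmap_of P y = j by apply: val_inj; rewrite ffunE mj val_insubd /= ltn_ord.
by have := pair_in_block y j; rewrite mj eqxx => /andP[].
Qed.

Lemma block_pos_minmap_of y : pblock P (pos_el (minmap_of P y)) = pblock P (Some y).
Proof. by case: (minmap_of_spec y) => jB _ _; apply: same_pblock. Qed.

Lemma block_neg_minmap_of y : pblock P (neg_el (minmap_of P y)) = pblock P (Some y).
Proof. by case: (minmap_of_spec y) => _ jB _; apply: same_pblock. Qed.

Lemma eq_minmap_of y y' :
  (minmap_of P y == minmap_of P y') = (pblock P (Some y) == pblock P (Some y')).
Proof.
apply/eqP/eqP => [e|e]; first by rewrite -block_pos_minmap_of e block_pos_minmap_of.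
case: (minmap_of_spec y) (minmap_of_spec y') => _ _ + [_ _]; rewrite e => -> [].
exact: val_inj.
Qed.

Lemma eq_omap_minmap_of x x' :
  (omap (minmap_of P) x == omap (minmap_of P) x') = (pblock P x == pblock P x').
Proof.
case: x => [y|]; case: x' => [y'|] /=; rewrite ?eqxx ?(inj_eq Some_inj) ?eq_minmap_of //.
- by rewrite (negbTE (nonzero_block y)).
- by rewrite [RHS]eq_sym (negbTE (nonzero_block y')).
Qed.

Lemma minmap_ofK : partition_of (minmap_of P) = P.
Proof.
rewrite -{2}(preim_partition_pblock partP); apply: eq_imset => x.
by apply/setP => y; rewrite !inE eq_omap_minmap_of.
Qed.

Lemma valid_minmap_of : valid_minmap (minmap_of P).
Proof.
apply/forallP=> j; apply/and4P; split.
- apply/eqP; apply/idP/idP => /eqP e.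
    by rewrite -[X in _ == X]e eq_minmap_of -(block_neg_minmap_of (j, true)) e.
  by rewrite /leader -[X in _ == X]e eq_minmap_of -(block_pos_minmap_of (j, false)) e.
- by apply/forallP=> c; rewrite eq_minmap_of block_pos_minmap_of.
- apply/forallP=> c; case: (minmap_of_spec (j, c)) => _ _ m.
  by have := minabs_le (in_blockP (Some (j, c))); rewrite m abs_to_int_Some.
apply/implyP; rewrite eq_minmap_of => /eqP e.
have nj : neg_el j \in pblock P (Some (j, true)) by rewrite e in_blockP.
have := pair_in_block (j, true) j; rewrite in_blockP nj.
by case: (minmap_of_spec (j, true)) => _ _ -> /esym; rewrite eqSS val_eqE /leader eq_sym.
Qed.

Lemma nleaders_minmap_of : nleaders (minmap_of P) = k.
Proof.
have := card_partition_of valid_minmap_of; rewrite minmap_ofK.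
by case/and4P: Pk => _ /eqP -> _ _ [].
Qed.

End MinmapOf.

Definition count_minmaps n k : nat :=
  #|[set f : minmap n | valid_minmap f && (nleaders f == k)]|.

Lemma card_signed_kparts_zero n k :
  #|[set P : {set {set pmset n}} |
       signed_kpart k P && (pblock P (zero_el n) == [set zero_el n])]| = count_minmaps n k.
Proof.
have -> : [set P : {set {set pmset n}} |
       signed_kpart k P && (pblock P (zero_el n) == [set zero_el n])]
     = @partition_of n @: [set f | valid_minmap f && (nleaders f == k)].
  apply/setP=> P; rewrite inE; apply/andP/imsetP => [[Pk /eqP P0]|[f]].
    exists (minmap_of P); last by rewrite (minmap_ofK Pk).
    by rewrite inE (valid_minmap_of Pk P0) (nleaders_minmap_of Pk P0) eqxx.
  rewrite inE => /andP[fP /eqP <-] ->.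
  by rewrite signed_kpart_partition_of // zero_block_partition_of.
apply: card_in_imset => f g; rewrite !inE => /andP[fP _] /andP[gP _] e.
by rewrite -(partition_ofK fP) e partition_ofK.
Qed.

Section ExtendMinmap.
Variable n : nat.

Definition extend_minmap (g : minmap n) (a b : 'I_n.+1) : minmap n.+1 :=
  [ffun x => if unlift ord_max x.1 is Some j then lift ord_max (g (j, x.2))
             else if x.2 then a else b].

Definition restrict_minmap (f : minmap n.+1) : minmap n :=
  [ffun y => odflt y.1 (unlift ord_max (f (lift ord_max y.1, y.2)))].

Definition lifted_leader (g : minmap n) (a : 'I_n.+1) : bool :=
  if unlift ord_max a is Some j then leader g j else false.

(* +-(n+1) either form a new block (a = b = n) or join two distinct old blocks. *)
Definition admissible (g : minmap n) (a b : 'I_n.+1) : bool :=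
  ((a == ord_max) && (b == ord_max)) || [&& lifted_leader g a, lifted_leader g b & a != b].

Lemma lifted_leader_max g : lifted_leader g ord_max = false.
Proof. by rewrite /lifted_leader unlift_none. Qed.

Lemma card_lifted_leaders g : #|[set a | lifted_leader g a]| = nleaders g.
Proof.
have -> : [set a | lifted_leader g a] = lift ord_max @: [set j | leader g j].
  apply/setP=> a; rewrite inE /lifted_leader.
  case: (unliftP ord_max a) => [j ->|->]; first by rewrite (mem_imset _ _ lift_inj) inE.
  by apply/esym/imsetP=> -[j _ /eqP]; rewrite eq_liftF.
by rewrite card_imset ?card_leaders //; apply: lift_inj.
Qed.

Section Extend.
Variables (g : minmap n) (a b : 'I_n.+1).
Local Notation f := (extend_minmap g a b).

Lemma extend_lift j c : f (lift ord_max j, c) = lift ord_max (g (j, c)).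
Proof. by rewrite ffunE /= liftK. Qed.

Lemma extend_max c : f (ord_max, c) = if c then a else b.
Proof. by rewrite ffunE /= unlift_none. Qed.

Lemma restrict_extend : restrict_minmap f = g.
Proof. by apply/ffunP=> -[j c]; rewrite ffunE extend_lift liftK. Qed.

Lemma leader_extend_lift j : leader f (lift ord_max j) = leader g j.
Proof. by rewrite /leader extend_lift (inj_eq lift_inj). Qed.

Lemma valid_at_extend_lift j : valid_at f (lift ord_max j) = valid_at g j.
Proof.
rewrite /valid_at leader_extend_lift !extend_lift !(inj_eq lift_inj).
congr [&& _, _, _ & _]; apply: eq_forallb => c.
  by rewrite !extend_lift (inj_eq lift_inj).
by rewrite extend_lift !lift_max.
Qed.

Lemma extend_fixed x :
  (f (x, true) == x) = if x == ord_max then a == ord_max else lifted_leader g x.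
Proof.
case: (unliftP ord_max x) => [j ->|->]; last by rewrite extend_max !eqxx.
by rewrite lift_eqF extend_lift (inj_eq lift_inj) /lifted_leader liftK.
Qed.

Lemma valid_at_extend_max : valid_at f ord_max = admissible g a b.
Proof.
rewrite /valid_at /admissible /leader !forall_bool !extend_max !extend_fixed /=.
rewrite !leq_ord andbT.
case: (a =P ord_max) => [->|_]; case: (b =P ord_max) => [->|_] /=;
  by rewrite ?lifted_leader_max ?andbF ?implybF ?implybT ?andbA.
Qed.

Lemma valid_extend : valid_minmap f = valid_minmap g && admissible g a b.
Proof.
rewrite /valid_minmap forall_ord_recr valid_at_extend_max; congr (_ && _).
by apply: eq_forallb => j; rewrite valid_at_extend_lift.
Qed.

Lemma nleaders_extend : nleaders f = nleaders g + (a == ord_max).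
Proof.
rewrite /nleaders big_ord_recr /=; congr (_ + _); last by rewrite /leader extend_max.
apply: eq_bigr => j _; rewrite -leader_extend_lift; congr (leader f _).
by apply: val_inj; rewrite [RHS]lift_max.
Qed.

End Extend.

Lemma extend_restrict f : valid_minmap f ->
  extend_minmap (restrict_minmap f) (f (ord_max, true)) (f (ord_max, false)) = f.
Proof.
move=> fP; apply/ffunP=> -[i c]; case: (unliftP ord_max i) => [j ->|->]; last first.
  by rewrite extend_max; case: c.
rewrite extend_lift ffunE /=.
case: (unliftP ord_max (f (lift ord_max j, c))) => [j' -> //|fmax].
have := minmap_le fP (lift ord_max j, c).
by rewrite fmax leqNgt [X in X < _]lift_max ltn_ord.
Qed.

Lemma extend_minmap_inj :
  injective (fun p : minmap n * ('I_n.+1 * 'I_n.+1) => extend_minmap p.1 p.2.1 p.2.2).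
Proof.
move=> [g [a b]] [g' [a' b']] /= e.
have := congr1 (fun f : minmap n.+1 => f (ord_max, false)) e.
have := congr1 (fun f : minmap n.+1 => f (ord_max, true)) e.
by move: (congr1 restrict_minmap e); rewrite !restrict_extend !extend_max => -> -> ->.
Qed.

Lemma sum_admissible g k :
  \sum_(q : 'I_n.+1 * 'I_n.+1) (admissible g q.1 q.2 && (nleaders g + (q.1 == ord_max) == k))
  = ((nleaders g).+1 == k) + (nleaders g == k) * (nleaders g * (nleaders g).-1).
Proof.
set m := nleaders g.
have splitq (q : 'I_n.+1 * 'I_n.+1) :
    admissible g q.1 q.2 && (m + (q.1 == ord_max) == k)
    = (q == (ord_max, ord_max)) * (m.+1 == k)
      + [&& lifted_leader g q.1, lifted_leader g q.2 & q.1 != q.2] * (m == k) :> nat.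
  case: q => a b; rewrite /admissible xpair_eqE /=.
  case: (a =P ord_max) => [->|_]; case: (b =P ord_max) => [->|_];
    by rewrite /= ?lifted_leader_max ?addn0 ?addn1 ?mul1n ?mul0n ?add0n ?mulnb.
rewrite (eq_bigr _ (fun q _ => splitq q)) big_split /= -!big_distrl /=.
rewrite (bigD1 (ord_max, ord_max)) //= eqxx big1 => [|q /negbTE -> //].
rewrite addn0 mul1n -card_set_sum_nat mulnC.
by rewrite (card_distinct_pairs (lifted_leader g)) card_lifted_leaders.
Qed.

End ExtendMinmap.

Lemma count_minmaps_succ n k :
  count_minmaps n.+1 k = \sum_(g : minmap n)
    valid_minmap g * (((nleaders g).+1 == k) + (nleaders g == k) * (nleaders g * (nleaders g).-1)).
Proof.
pose E (p : minmap n * ('I_n.+1 * 'I_n.+1)) := extend_minmap p.1 p.2.1 p.2.2.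
rewrite /count_minmaps.
have -> : [set f : minmap n.+1 | valid_minmap f && (nleaders f == k)]
    = E @: [set p | valid_minmap (E p) && (nleaders (E p) == k)].
  apply/setP=> f; rewrite inE; apply/idP/imsetP => [fk|[p]]; last by rewrite inE => ? ->.
  have fP : valid_minmap f by case/andP: fk.
  exists (restrict_minmap f, (f (ord_max, true), f (ord_max, false)));
    by rewrite /E /= ?inE extend_restrict.
rewrite card_imset; last exact: extend_minmap_inj.
rewrite card_set_sum_nat /E.
rewrite -(pair_bigA _ (fun g q => valid_minmap (extend_minmap g q.1 q.2)
                                 && (nleaders (extend_minmap g q.1 q.2) == k) : nat)) /=.
apply: eq_bigr => g _; rewrite -sum_admissible big_distrr /=.
by apply: eq_bigr => -[a b] _; rewrite valid_extend nleaders_extend -andbA mulnb.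
Qed.

Lemma count_minmaps0 k : count_minmaps 0 k = (k == 0).
Proof.
have valid0 (g : minmap 0) : valid_minmap g by apply/forallP => -[].
have nleaders0 (g : minmap 0) : nleaders g = 0 by rewrite /nleaders big_ord0.
rewrite /count_minmaps card_set_sum_nat.
under eq_bigr => g _ do rewrite valid0 nleaders0 eq_sym.
by rewrite sum_nat_const card_ffun !card_prod !card_ord /= mul1n.
Qed.

Lemma count_minmaps_gt n k : n < k -> count_minmaps n k = 0.
Proof.
move=> ltnk; apply/eqP; rewrite cards_eq0; apply/eqP/setP => f; rewrite !inE.
by apply/negbTE; rewrite negb_and orbC neq_ltn (leq_ltn_trans (nleaders_le f) ltnk).
Qed.

Lemma count_minmapsS0 n : count_minmaps n.+1 0 = 0.
Proof.
by rewrite count_minmaps_succ big1 // => g _; case: (nleaders g) => [|m]; rewrite ?mul0n ?muln0.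
Qed.

Lemma count_minmapsSS n k :
  count_minmaps n.+1 k.+1 = count_minmaps n k + k.+1 * k * count_minmaps n k.+1.
Proof.
rewrite count_minmaps_succ /count_minmaps !card_set_sum_nat big_distrr -big_split /=.
apply: eq_bigr => g _; rewrite eqSS; case: valid_minmap; rewrite ?mul0n ?muln0 // mul1n.
congr (_ + _); case: (nleaders g =P k.+1) => [->|_];
  by rewrite ?eqxx ?mul1n ?muln1 ?mul0n ?muln0.
Qed.

Lemma JS_count_minmaps n k : JS (-1)%R n k = count_minmaps n k.
Proof.
elim: n k => [|n IHn] [|k] /=; rewrite ?count_minmaps0 ?count_minmapsS0 //.
case: ltnP => [ltnk|_]; first by rewrite count_minmaps_gt.
have -> : (k.+1%:Z + -1 = k)%R by rewrite -addn1 PoszD addrK.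
by rewrite !IHn count_minmapsSS PoszD !PoszM.
Qed.

Theorem corollary7 (n k : nat) :
  (0 < k)%N -> (k <= n)%N ->
  JS (-1)%R n k =
  Posz (#|[set P : {set {set pmset n}} |
       signed_kpart k P && (pblock P (zero_el n) == [set zero_el n])]|).
Proof. by move=> _ _; rewrite card_signed_kparts_zero JS_count_minmaps. Qed.
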